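(* Let $\Phi$ be a channel matrix whose rows $P^1,\dots,P^4\in\Delta^n$ are in general position, let $Q^0$ be the equidistant point from $P^1,\dots,P^4$ with barycentric coordinate $\boldsymbol\lambda^0$, and suppose $\lambda^0_1<0$, $\lambda^0_2<0$, $\lambda^0_3\ge0$, $\lambda^0_4\ge0$. Let $Q^{1(1)}=\pi(Q^0|L(P^2,P^3,P^4))$ and $Q^{1(2)}=\pi(Q^0|L(P^1,P^3,P^4))$ with barycentric coordinates $\boldsymbol\lambda^{1(1)},\boldsymbol\lambda^{1(2)}$ about $P^1,\dots,P^4$, and suppose $\lambda^{1(2)}_1<0$. Suppose further $\lambda^{1(1)}_2\ge0$, $\lambda^{1(1)}_3<0$, $\lambda^{1(1)}_4\ge0$, and let $Q^{2\dagger}=\pi(Q^0|L(P^2,P^4))$. Then the output distribution achieving the channel capacity is $Q^\ast=Q^{2\dagger}$ and the channel capacity is $C=D(P^2\|Q^{2\dagger})$.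
   Context: $\Delta^n=\{Q:Q_j>0,\sum_jQ_j=1\}$, $\bar\Delta^m=\{\boldsymbol\lambda:\lambda_i\ge0,\sum_i\lambda_i=1\}$; $D(Q\|Q')=\sum_jQ_j\log(Q_j/Q'_j)$. Rows are in general position if $P^2-P^1,\dots,P^m-P^1$ are linearly independent. $L(S^1,\dots,S^r)=\{\sum_i\lambda_iS^i:\sum_i\lambda_i=1\}\cap\Delta^n$; for such an affine subspace $L$, $\pi(Q'|L)$ is the unique $Q\in L$ minimizing $D(Q\|Q')$. The barycentric coordinate of $Q\in L(P^1,\dots,P^m)$ is the unique $\boldsymbol\lambda$ with $\sum_i\lambda_i=1$, $Q=\sum_i\lambda_iP^i$. The equidistant point is the unique $Q^0\in L(P^1,\dots,P^m)$ with all $D(P^i\|Q^0)$ equal. Mutual information $I(\boldsymbol\lambda,\Phi)=\sum_{i,j}\lambda_iP^i_j\log(P^i_j/Q_j)$ with $Q=\boldsymbol\lambda\Phi$; capacity $C=\max_{\boldsymbol\lambda\in\bar\Delta^m}I(\boldsymbol\lambda,\Phi)$; the capacity-achieving output distribution is $Q^\ast=\boldsymbol\lambda^\ast\Phi$ for a maximizer $\boldsymbol\lambda^\ast$ (unique). *)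

From mathcomp Require Import all_boot all_order all_algebra.
From mathcomp Require Import all_classical all_reals all_analysis.
Set Implicit Arguments. Unset Strict Implicit. Unset Printing Implicit Defensive.
Import Order.TTheory GRing.Theory Num.Theory.
Local Open Scope ring_scope.

(* Row indices of the 4 x n channel matrix: P^1..P^4 are rows p1..p4. *)
Definition p1 : 'I_4 := @Ordinal 4 0 isT.
Definition p2 : 'I_4 := @Ordinal 4 1 isT.
Definition p3 : 'I_4 := @Ordinal 4 2 isT.
Definition p4 : 'I_4 := @Ordinal 4 3 isT.

Section Channel.
Variables (R : realType) (n : nat).

Definition in_simplex (Q : 'I_n -> R) : Prop :=
  (forall j, 0 < Q j) /\ \sum_j Q j = 1.

Definition in_csimplex (l : 'I_4 -> R) : Prop :=
  (forall i, 0 <= l i) /\ \sum_i l i = 1.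

Definition KL (Q Q' : 'I_n -> R) : R :=
  \sum_j Q j * ln (Q j / Q' j).

Variable Phi : 'M[R]_(4, n).

Definition chrow (i : 'I_4) : 'I_n -> R := fun j => Phi i j.

Definition outdist (l : 'I_4 -> R) : 'I_n -> R :=
  fun j => \sum_i l i * Phi i j.

Definition general_position : Prop :=
  forall c : 'I_3 -> R,
    (forall j, \sum_k c k * (Phi (lift p1 k) j - Phi p1 j) = 0) ->
    forall k, c k = 0.

Definition affcomb (S : {set 'I_4}) (l : 'I_4 -> R) (Q : 'I_n -> R) : Prop :=
  (forall i, i \notin S -> l i = 0) /\ \sum_i l i = 1 /\
  (forall j, Q j = outdist l j).

Definition inL (S : {set 'I_4}) (Q : 'I_n -> R) : Prop :=
  (exists l, affcomb S l Q) /\ in_simplex Q.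

Definition is_proj (S : {set 'I_4}) (Q' Q : 'I_n -> R) : Prop :=
  inL S Q /\ forall Q'', inL S Q'' -> KL Q Q' <= KL Q'' Q'.

Definition barycentric (l : 'I_4 -> R) (Q : 'I_n -> R) : Prop :=
  affcomb [set: 'I_4] l Q.

Definition equidistant (Q : 'I_n -> R) : Prop :=
  inL [set: 'I_4] Q /\ forall i i', KL (chrow i) Q = KL (chrow i') Q.

Definition mutinf (l : 'I_4 -> R) : R :=
  \sum_i \sum_j l i * Phi i j * ln (Phi i j / outdist l j).

End Channel.

From mathcomp Require Import all_boot all_order all_algebra.
From mathcomp Require Import all_classical all_reals all_analysis.
From mathcomp Require Import ring lra.
Import Order.TTheory GRing.Theory Num.Theory.
Local Open Scope ring_scope.

(* Q2 is the I-projection of the equidistant point Q0 onto the line through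
   P^2 and P^4; the first-order condition of this projection makes Q2
   equidistant from P^2 and P^4, at distance c, and equidistance forces Q2 onto
   the segment [P^2, P^4], i.e. Q2 = m Phi with m a probability vector.
   For Q = l Phi the compensation identity
     sum_i l_i D(P^i||S) = sum_i l_i D(P^i||Q) + D(Q||S)
   applied in both directions between Q2 and Q11 (resp. Q0) gives
     l11_3 (D(P^3||Q2) - c) >= 0  and  l0_1 (D(P^1||Q2) - c) + l0_3 (D(P^3||Q2) - c) >= 0,
   so the sign hypotheses yield D(P^i||Q2) <= c for every i.  These are the
   Kuhn-Tucker conditions: for every input l,
     I(l) = sum_i l_i D(P^i||Q2) - D(l Phi||Q2) <= c - D(l Phi||Q2),
   with equality at l = m, and Gibbs' inequality settles uniqueness of the
   output distribution. *)

Section FiniteWeights.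
Context {R : pzRingType} {I : finType}.

Lemma sum_delta_mul (i : I) (F : I -> R) : \sum_a (a == i)%:R * F a = F i.
Proof.
rewrite (bigD1 i) //= eqxx mul1r big1 ?addr0 // => a /negbTE ->.
by rewrite mul0r.
Qed.

Lemma sum_delta (i : I) : \sum_a ((a == i)%:R : R) = 1.
Proof. by rewrite -[RHS](sum_delta_mul i (fun=> 1)); under [RHS]eq_bigr do rewrite mulr1. Qed.

Lemma sum_const_on_support {S : {set I}} {w f : I -> R} {a : R} :
  \sum_i w i = 1 -> (forall i, i \notin S -> w i = 0) ->
  (forall i, i \in S -> f i = a) -> \sum_i w i * f i = a.
Proof.
move=> w1 w0 fS; rewrite -[RHS]mul1r -w1 mulr_suml; apply: eq_bigr => i _.
by case: (boolP (i \in S)) => [/fS -> // | /w0 ->]; rewrite !mul0r.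
Qed.

End FiniteWeights.

Section RealFacts.
Context {R : realType}.

Lemma ln_leif_subr1 (x : R) : 0 < x -> ln x <= x - 1 ?= iff (x == 1).
Proof.
move=> x0; split; first by have := @le_ln1Dx R (x - 1); rewrite subrKC; apply; lra.
have [->|x1] := eqVneq x 1; first by rewrite ln1 subrr eqxx.
have lnx0 : ln x != 0 by rewrite ln_eq0.
apply/negbTE; apply: contra_neq x1 => lnx.
by have := expR_gt1Dx lnx0; rewrite lnK ?posrE // lnx; lra.
Qed.

Lemma lin_coef_eq0 {A K eps : R} : 0 < eps -> 0 <= K ->
  (forall t, `|t| <= eps -> 0 <= t * A + t ^+ 2 * K) -> A = 0.
Proof.
move=> eps0 K0; wlog A0 : A / A < 0 => [WL|] ge0.
  have [A0|A0|//] := ltrgtP A 0; first exact: WL.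
  apply/eqP; rewrite -oppr_eq0; apply/eqP; apply: WL; first by rewrite oppr_lt0.
  by move=> t; rewrite -normrN => /ge0; rewrite sqrrN mulrN mulNr.
pose s := Order.min eps (- A / (K + 1)).
have s0 : 0 < s by rewrite lt_min eps0 divr_gt0 //; lra.
have sK : s * K < - A.
  have : s <= - A / (K + 1) by rewrite ge_min lexx orbT.
  by rewrite ler_pdivlMr; nra.
by have := ge0 s; rewrite gtr0_norm // ge_min lexx => /(_ isT); nra.
Qed.

End RealFacts.

Section KullbackLeibler.
Context {R : realType} {n : nat}.
Implicit Types P Q S v : 'I_n -> R.

Lemma KL_lnB P Q : (forall j, 0 < P j) -> (forall j, 0 < Q j) ->
  KL P Q = \sum_j P j * (ln (P j) - ln (Q j)).
Proof. by move=> P0 Q0; apply: eq_bigr => j _; rewrite ln_div ?posrE. Qed.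

Lemma KL_chain P Q S :
  (forall j, 0 < P j) -> (forall j, 0 < Q j) -> (forall j, 0 < S j) ->
  KL P S = KL P Q + \sum_j P j * (ln (Q j) - ln (S j)).
Proof.
move=> P0 Q0 S0; rewrite !KL_lnB // -big_split; apply: eq_bigr => j _ /=; ring.
Qed.

Lemma KL_self {P} : (forall j, 0 < P j) -> KL P P = 0.
Proof. by move=> P0; rewrite /KL big1 // => j _; rewrite divff ?gt_eqF // ln1 mulr0. Qed.

Lemma KL_leif {Q S} : in_simplex Q -> in_simplex S ->
  0 <= KL Q S ?= iff [forall j, S j / Q j == 1].
Proof.
move=> [Q0 sQ] [S0 sS].
have term_leif j : Q j * ln (S j / Q j) <= Q j * (S j / Q j - 1) ?= iff (S j / Q j == 1).
  by rewrite (mono_leif (ler_pM2l (Q0 j))); apply: ln_leif_subr1; rewrite divr_gt0.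
have := leif_sum (P := predT) (fun j _ => term_leif j).
have -> : \sum_j Q j * ln (S j / Q j) = - KL Q S.
  rewrite KL_lnB // -sumrN; apply: eq_bigr => j _; rewrite ln_div ?posrE //; ring.
have -> : \sum_j Q j * (S j / Q j - 1) = \sum_j S j - \sum_j Q j.
  by rewrite -sumrB; apply: eq_bigr => j _; field; rewrite gt_eqF.
rewrite sS sQ subrr.
by case; rewrite oppr_le0 => le eqC; split; rewrite // eq_sym -oppr_eq0 eqC.
Qed.

Lemma KL_ge0 {Q S} : in_simplex Q -> in_simplex S -> 0 <= KL Q S.
Proof. by move=> sQ sS; case: (KL_leif sQ sS). Qed.

Lemma KL_eq0 {Q S} : in_simplex Q -> in_simplex S -> KL Q S = 0 ->
  forall j, Q j = S j.
Proof.
move=> sQ sS KL0 j; case: (KL_leif sQ sS) => _; rewrite KL0 eqxx.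
by move/esym/forallP/(_ j)/eqP/divr1_eq.
Qed.

Lemma KL_gt0 {Q S} : in_simplex Q -> in_simplex S -> (exists j, Q j != S j) ->
  0 < KL Q S.
Proof.
move=> sQ sS [j /eqP QSj]; rewrite lt_neqAle KL_ge0 // andbT eq_sym.
by apply/eqP => KL0; apply: QSj; exact: KL_eq0 sQ sS KL0 j.
Qed.

Lemma KL_le_chi2 P Q : (forall j, 0 < P j) -> (forall j, 0 < Q j) ->
  \sum_j P j = \sum_j Q j -> KL P Q <= \sum_j (P j - Q j) ^+ 2 / Q j.
Proof.
move=> P0 Q0 sPQ.
have -> : \sum_j (P j - Q j) ^+ 2 / Q j = \sum_j P j * (P j / Q j - 1).
  rewrite -[LHS]addr0 -[X in _ + X](subrr (\sum_j Q j)) -[X in _ + (X - _)]sPQ.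
  by rewrite -sumrB -big_split; apply: eq_bigr => j _ /=; field; rewrite gt_eqF.
apply: ler_sum => j _; rewrite ler_pM2l //.
exact: (ln_leif_subr1 _ (divr_gt0 (P0 j) (Q0 j))).1.
Qed.

Lemma perturb_gt0 {Q} v : (forall j, 0 < Q j) ->
  exists2 eps : R, 0 < eps & forall t, `|t| <= eps -> forall j, 0 < Q j + t * v j.
Proof.
move=> Q0; pose M := \big[Order.max/0]_j (`|v j| / Q j).
have M0 : 0 <= M := bigmax_ge_id _ _ _ _.
exists (M + 1)^-1 => [|t tle j]; first by rewrite invr_gt0; lra.
have vM : `|v j| <= M * Q j by rewrite -ler_pdivrMr //; exact: le_bigmax.
have tv : `|t| * `|v j| <= M / (M + 1) * Q j.
  have -> : M / (M + 1) * Q j = (M + 1)^-1 * (M * Q j) by rewrite mulrAC mulrC.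
  by apply: ler_pM.
have MQ : M / (M + 1) * Q j < Q j.
  by rewrite -[ltRHS]mul1r ltr_pM2r // ltr_pdivrMr; lra.
have := ler_norm (- (t * v j)); rewrite normrN normrM; lra.
Qed.

Lemma KL_stationary Q Q0 v :
  (forall j, 0 < Q j) -> (forall j, 0 < Q0 j) -> \sum_j v j = 0 ->
  (forall t, (forall j, 0 < Q j + t * v j) ->
     KL Q Q0 <= KL (fun j => Q j + t * v j) Q0) ->
  \sum_j v j * (ln (Q j) - ln (Q0 j)) = 0.
Proof.
move=> Qgt0 Q0gt0 v0 Qmin; have [eps eps0 small] := perturb_gt0 v Qgt0.
pose K := \sum_j v j ^+ 2 / Q j.
have K0 : 0 <= K by apply: sumr_ge0 => j _; rewrite divr_ge0 ?sqr_ge0 ?ltW.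
apply: (lin_coef_eq0 eps0 K0) => t /small Qt0.
pose Qt j := Q j + t * v j.
have chi2 : KL Qt Q <= t ^+ 2 * K.
  have -> : t ^+ 2 * K = \sum_j (Qt j - Q j) ^+ 2 / Q j.
    rewrite mulr_sumr; apply: eq_bigr => j _.
    by rewrite /Qt addrC addKr; field; rewrite gt_eqF.
  apply: KL_le_chi2 => //; rewrite big_split /= -mulr_sumr v0; lra.
have chain : KL Qt Q0 = KL Qt Q + KL Q Q0 + t * \sum_j v j * (ln (Q j) - ln (Q0 j)).
  rewrite (KL_chain Qt Q Q0) // -addrA; congr (_ + _).
  rewrite (KL_lnB Q Q0) // mulr_sumr -big_split; apply: eq_bigr => j _ /=.
  by rewrite /Qt; ring.
by have := Qmin t Qt0; rewrite -/Qt chain; lra.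
Qed.

End KullbackLeibler.

Section Channel.
Context {R : realType} {n : nat} {Phi : 'M[R]_(4, n)}.
Hypothesis row_simplex : forall i, in_simplex (chrow Phi i).

Let Phi_gt0 i j : 0 < Phi i j. Proof. exact: (row_simplex i).1. Qed.
Let row_sum1 i : \sum_j Phi i j = 1. Proof. exact: (row_simplex i).2. Qed.

Lemma outdist_simplex {l} : in_csimplex l -> in_simplex (outdist Phi l).
Proof.
move=> [l0 l1]; split => [j|]; last first.
  by rewrite /outdist exchange_big /=; under eq_bigr do rewrite -mulr_sumr row_sum1 mulr1.
have /hasP[i _ /= li0] : has (fun i => true && (0 < l i)) (index_enum 'I_4).
  by rewrite -psumr_neq0 // l1 oner_neq0.
rewrite /outdist (bigD1 i) //=; apply: ltr_pwDl; first exact: mulr_gt0.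
by apply: sumr_ge0 => k _; exact: mulr_ge0 (l0 k) (ltW (Phi_gt0 k j)).
Qed.

Lemma mutinfE l : mutinf Phi l = \sum_i l i * KL (chrow Phi i) (outdist Phi l).
Proof.
by apply: eq_bigr => i _; rewrite /KL mulr_sumr; apply: eq_bigr => j _; rewrite mulrA.
Qed.

Lemma sum_KL_compensation m {Q S : 'I_n -> R} :
  (forall j, 0 < Q j) -> (forall j, 0 < S j) -> (forall j, Q j = outdist Phi m j) ->
  \sum_i m i * KL (chrow Phi i) S = \sum_i m i * KL (chrow Phi i) Q + KL Q S.
Proof.
move=> Q0 S0 Qm.
have chain i : KL (chrow Phi i) S =
    KL (chrow Phi i) Q + \sum_j Phi i j * (ln (Q j) - ln (S j)).
  by apply: KL_chain => //; exact: Phi_gt0.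
under eq_bigr do rewrite chain mulrDr.
rewrite big_split /= (KL_lnB Q S) //; congr (_ + _).
under eq_bigr do rewrite mulr_sumr; rewrite exchange_big; apply: eq_bigr => j _ /=.
by rewrite Qm /outdist mulr_suml; apply: eq_bigr => i _; rewrite mulrA.
Qed.

Lemma barycentric_unique {l l'} : general_position Phi ->
  \sum_i l i = 1 -> \sum_i l' i = 1 ->
  (forall j, outdist Phi l j = outdist Phi l' j) -> forall i, l i = l' i.
Proof.
move=> GP l1 l'1 E; pose d i := l i - l' i.
have d0 : \sum_i d i = 0 by rewrite sumrB l1 l'1 subrr.
have d_lift k : d (lift p1 k) = 0.
  apply: (GP (fun k => d (lift p1 k))) => j; have : \sum_i d i * (Phi i j - Phi p1 j) = 0.
    under eq_bigr do rewrite mulrBr mulrBl.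
    rewrite !sumrB -mulr_suml d0 mul0r subr0; apply/eqP; rewrite subr_eq0.
    exact/eqP/E.
  by rewrite (bigD1_ord p1) //= subrr mulr0 add0r.
move=> i; apply/eqP; rewrite -subr_eq0 -/(d i).
case: (unliftP p1 i) => [k ->|->]; first by rewrite d_lift.
move: d0; rewrite (bigD1_ord p1) //= big1 ?addr0 => [/eqP //|k _]; exact: d_lift.
Qed.

Lemma row_neq i k : general_position Phi -> i != k -> exists j, Phi i j != Phi k j.
Proof.
move=> GP ik; apply/(@existsP _ (fun j => Phi i j != Phi k j)).
rewrite -negb_forall; apply: contra ik => /forallP rows_eq.
have rows_out j : outdist Phi (fun b => (b == i)%:R) j = outdist Phi (fun b => (b == k)%:R) j.
  by rewrite /outdist !sum_delta_mul; apply/eqP/rows_eq.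
have := barycentric_unique GP (sum_delta i) (sum_delta k) rows_out i.
by rewrite eqxx; case: (i == k) => //= /eqP; rewrite oner_eq0.
Qed.

Lemma inL_shift {S Q i k t} : inL Phi S Q -> i \in S -> k \in S ->
  (forall j, 0 < Q j + t * (Phi i j - Phi k j)) ->
  inL Phi S (fun j => Q j + t * (Phi i j - Phi k j)).
Proof.
move=> [[l [lS [l1 Ql]]] [_ Q1]] iS kS Qt0.
split; last first.
  split=> //; rewrite big_split /= Q1 -mulr_sumr sumrB.
  by rewrite !row_sum1 subrr mulr0 addr0.
exists (fun a => l a + t * ((a == i)%:R - (a == k)%:R)); split; [|split].
- move=> a aS; rewrite lS //.
  have /negbTE -> : a != i by apply: contraNneq aS => ->.
  have /negbTE -> : a != k by apply: contraNneq aS => ->.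
  by rewrite subrr mulr0 addr0.
- by rewrite big_split /= l1 -mulr_sumr sumrB !sum_delta subrr mulr0 addr0.
- move=> j; rewrite Ql /outdist; under [RHS]eq_bigr do rewrite mulrDl.
  rewrite big_split /= -(sum_delta_mul i (Phi^~ j)) -(sum_delta_mul k (Phi^~ j)).
  by rewrite -sumrB mulr_sumr; congr (_ + _); apply: eq_bigr => a _; ring.
Qed.

Lemma is_proj_equidistant {S Q0 Q i k} : equidistant Phi Q0 -> is_proj Phi S Q0 Q ->
  i \in S -> k \in S -> KL (chrow Phi i) Q = KL (chrow Phi k) Q.
Proof.
move=> [[_ [Q0gt0 _]] Q0eq] [QL Qmin] iS kS; have Qgt0 := QL.2.1.
have stationary : \sum_j (Phi i j - Phi k j) * (ln (Q j) - ln (Q0 j)) = 0.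
  apply: KL_stationary => // [|t Qt0]; first by rewrite sumrB !row_sum1 subrr.
  by apply: Qmin; exact: inL_shift.
(* Since Q0 is equidistant, [stationary] reads KL(P^k||Q) - KL(P^i||Q) = 0. *)
have chain a : KL (chrow Phi a) Q0 =
    KL (chrow Phi a) Q + \sum_j Phi a j * (ln (Q j) - ln (Q0 j)).
  by apply: KL_chain => //; exact: Phi_gt0.
move: stationary (Q0eq i k); under eq_bigr do rewrite mulrBl.
by rewrite sumrB !chain; lra.
Qed.

Lemma sum_excess_ge0 {S T l m Q Q' e c} :
  in_simplex Q -> in_simplex Q' -> affcomb Phi S l Q -> affcomb Phi T m Q' ->
  T \subset S -> (forall i, i \in S -> KL (chrow Phi i) Q = e) ->
  (forall i, i \in T -> KL (chrow Phi i) Q' = c) ->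
  0 <= \sum_i l i * (KL (chrow Phi i) Q' - c).
Proof.
move=> sQ sQ' [lS [l1 Ql]] [mT [m1 Qm]] TS Q_e Q'_c.
have mS i : i \notin S -> m i = 0.
  by move=> iS; apply: mT; apply: contraNN iS; apply: (fintype.subsetP TS).
have toQ' := sum_KL_compensation l sQ.1 sQ'.1 Ql.
have toQ := sum_KL_compensation m sQ'.1 sQ.1 Qm.
rewrite (sum_const_on_support l1 lS Q_e) in toQ'.
rewrite (sum_const_on_support m1 mS Q_e) (sum_const_on_support m1 mT Q'_c) in toQ.
(* The excess is KL Q Q' + KL Q' Q. *)
under eq_bigr do rewrite mulrBr; rewrite sumrB -mulr_suml l1 mul1r toQ'.
by have := KL_ge0 sQ sQ'; have := KL_ge0 sQ' sQ; lra.
Qed.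

Lemma pair_weight_ge0 {a b m Q} : in_simplex Q -> affcomb Phi [set a; b] m Q ->
  KL (chrow Phi a) Q = KL (chrow Phi b) Q -> (exists j, Phi b j != Phi a j) ->
  0 <= m b.
Proof.
move=> sQ [mab [m1 Qm]] KLab rows_ab.
have toQ : \sum_i m i * KL (chrow Phi i) Q = KL (chrow Phi a) Q.
  apply: (sum_const_on_support m1 mab) => i.
  by rewrite !inE => /orP[] /eqP ->.
have toPa : \sum_i m i * KL (chrow Phi i) (chrow Phi a) =
    m b * KL (chrow Phi b) (chrow Phi a).
  rewrite (bigD1 b) //= big1 ?addr0 // => i ib.
  have [->|ia] := eqVneq i a; first by rewrite (KL_self (row_simplex a).1) mulr0.
  by rewrite mab ?mul0r // !inE negb_or ia.
have := sum_KL_compensation m sQ.1 (row_simplex a).1 Qm.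
rewrite toQ toPa => comp.
have := KL_gt0 (row_simplex b) (row_simplex a) rows_ab.
by have := KL_ge0 sQ (row_simplex a); have := KL_ge0 (row_simplex a) sQ; nra.
Qed.

Lemma pair_csimplex {a b m Q} : in_simplex Q -> affcomb Phi [set a; b] m Q ->
  KL (chrow Phi a) Q = KL (chrow Phi b) Q -> (exists j, Phi a j != Phi b j) ->
  in_csimplex m.
Proof.
move=> sQ mab KLab [j rows_ab]; split=> [i|]; last by case: mab => _ [].
have [/set2P[]->|iab] := boolP (i \in [set a; b]); last by rewrite mab.1.
- apply: (pair_weight_ge0 sQ _ (esym KLab)); first by rewrite finset.setUC.
  by exists j.
- by apply: (pair_weight_ge0 sQ mab KLab); exists j; rewrite eq_sym.
Qed.

Lemma capacity_of_saddle_point {m c} : in_csimplex m ->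
  (forall i, KL (chrow Phi i) (outdist Phi m) <= c) ->
  (forall i, 0 < m i -> KL (chrow Phi i) (outdist Phi m) = c) ->
  (forall l, in_csimplex l -> mutinf Phi l <= c) /\
  (exists l, in_csimplex l /\ mutinf Phi l = c) /\
  (forall l, in_csimplex l -> mutinf Phi l = c ->
     forall j, outdist Phi l j = outdist Phi m j).
Proof.
move=> msimp KL_le KL_eq; have sQ := outdist_simplex msimp.
have mutinf_le l : in_csimplex l -> mutinf Phi l + KL (outdist Phi l) (outdist Phi m) <= c.
  move=> lsimp; have sl := outdist_simplex lsimp.
  rewrite mutinfE -(sum_KL_compensation l sl.1 sQ.1) //.
  rewrite -[leRHS]mul1r -lsimp.2 mulr_suml; apply: ler_sum => i _.
  by rewrite ler_wpM2l ?lsimp.1.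
split; [|split].
- move=> l lsimp; have := mutinf_le l lsimp.
  by have := KL_ge0 (outdist_simplex lsimp) sQ; lra.
- exists m; split=> //; rewrite mutinfE -[RHS]mul1r -msimp.2 mulr_suml.
  apply: eq_bigr => i _.
  by have := msimp.1 i; rewrite le_eqVlt => /orP[/eqP <-|/KL_eq ->]; rewrite ?mul0r.
- move=> l lsimp mutinf_c; apply: (KL_eq0 (outdist_simplex lsimp) sQ).
  by have := mutinf_le l lsimp; have := KL_ge0 (outdist_simplex lsimp) sQ; lra.
Qed.

End Channel.

Lemma sum_ord4 {R : nmodType} (F : 'I_4 -> R) : \sum_i F i = F p1 + F p2 + F p3 + F p4.
Proof.
rewrite !big_ord_recr big_ord0 /= add0r.
by congr (_ + _ + _ + _); congr F; apply/val_inj.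
Qed.

Lemma ord4P (i : 'I_4) : [\/ i = p1, i = p2, i = p3 | i = p4].
Proof.
case: i => [[|[|[|[|//]]]] lt_i4]; [constructor 1|constructor 2|constructor 3|constructor 4];
  exact/val_inj.
Qed.

Theorem theorem22 (R : realType) (n : nat) (Phi : 'M[R]_(4, n))
  (Q0 Q11 Q12 Q2 : 'I_n -> R) (l0 l11 l12 : 'I_4 -> R) :
  (forall i, in_simplex (chrow Phi i)) ->
  general_position Phi ->
  equidistant Phi Q0 -> barycentric Phi l0 Q0 ->
  l0 p1 < 0 -> l0 p2 < 0 -> 0 <= l0 p3 -> 0 <= l0 p4 ->
  is_proj Phi [set p2; p3; p4] Q0 Q11 -> barycentric Phi l11 Q11 ->
  is_proj Phi [set p1; p3; p4] Q0 Q12 -> barycentric Phi l12 Q12 ->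
  l12 p1 < 0 ->
  0 <= l11 p2 -> l11 p3 < 0 -> 0 <= l11 p4 ->
  is_proj Phi [set p2; p4] Q0 Q2 ->
  (* C = max_{lambda} I(lambda,Phi) = D(P^2 || Q2) *)
  (forall l, in_csimplex l -> mutinf Phi l <= KL (chrow Phi p2) Q2) /\
  (exists l, in_csimplex l /\ mutinf Phi l = KL (chrow Phi p2) Q2) /\
  (* every capacity-achieving input gives output Q* = Q2 *)
  (forall l, in_csimplex l -> mutinf Phi l = KL (chrow Phi p2) Q2 ->
     forall j, outdist Phi l j = Q2 j).
Proof.
move=> rows GP Q0eq bary0 l0_1 _ l0_3 _ P11 [_ [l11_sum Q11_l11]] _ _ _ _ l11_3 _ P2.
have [[[m [m_off [m_sum Q2_m]]] sQ2] _] := P2.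
have [[[k [k_off [k_sum Q11_k]]] sQ11] _] := P11.
have m24 : affcomb Phi [set p2; p4] m Q2 := conj m_off (conj m_sum Q2_m).
set c := KL (chrow Phi p2) Q2.
have KL_Q2 i : i \in [set p2; p4] -> KL (chrow Phi i) Q2 = c.
  by move=> iS; apply: (is_proj_equidistant rows Q0eq P2 iS); rewrite !inE eqxx.
have KL4 : KL (chrow Phi p4) Q2 = c by apply: KL_Q2; rewrite !inE eqxx orbT.
have KL3_le : KL (chrow Phi p3) Q2 <= c.
  have TS : [set p2; p4] \subset [set p2; p3; p4].
    by apply/fintype.subsetP => i; rewrite !inE => /orP[] ->; rewrite ?orbT.
  have p3S : p3 \in [set p2; p3; p4] by rewrite !inE eqxx orbT.
  have := sum_excess_ge0 rows sQ11 sQ2 (conj k_off (conj k_sum Q11_k)) m24 TS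
    (fun i iS => is_proj_equidistant rows Q0eq P11 iS p3S) KL_Q2.
  have k1 : k p1 = 0 by apply: k_off; rewrite !inE.
  rewrite sum_ord4 k1 -/c KL4 !subrr !mulr0 mul0r !addr0 add0r.
  have l11_k : l11 p3 = k p3.
    by apply: (barycentric_unique GP l11_sum k_sum) => j; rewrite -Q11_l11 -Q11_k.
  by rewrite -l11_k; nra.
have KL1_le : KL (chrow Phi p1) Q2 <= c.
  have := sum_excess_ge0 rows Q0eq.1.2 sQ2 bary0 m24 (finset.subsetT _)
    (fun i _ => Q0eq.2 i p1) KL_Q2.
  by rewrite sum_ord4 -/c KL4 !subrr !mulr0 !addr0; nra.
have m_simplex : in_csimplex m.
  by apply: (pair_csimplex rows sQ2 m24 (esym KL4)); exact: row_neq.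
have KL_le i : KL (chrow Phi i) Q2 <= c by case: (ord4P i) => ->; rewrite ?KL4.
have KL_eq i : 0 < m i -> KL (chrow Phi i) Q2 = c.
  have [iS _|/m_off ->] := boolP (i \in [set p2; p4]); [exact: KL_Q2 | by rewrite ltxx].
have Q2E : Q2 = outdist Phi m := funext Q2_m.
rewrite Q2E in KL_le KL_eq *.
exact (capacity_of_saddle_point rows m_simplex KL_le KL_eq).
Qed.
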